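(* Let $(X,\delta_X)$ be a represented space. The following are equivalent: (1) $X$ admits a total precomplete representation $\delta:\mathbb{N}^\mathbb{N}\to X$ with $\delta\equiv\delta_X$; (2) every computable (single-valued, partial) $f:\subseteq\mathbb{N}^\mathbb{N}\to X$ has a total computable extension $g:\mathbb{N}^\mathbb{N}\to X$; (3) for every represented space $Y$ and every computable problem $f:\subseteq Y\rightrightarrows X$ there is a total computable problem $g:Y\rightrightarrows X$ with $g(y)\subseteq f(y)$ for all $y\in\mathrm{dom}(f)$; (4) $X$ is multi-retraceable, i.e. there is a computable multi-valued retraction $r:\overline{X}\rightrightarrows X$.
   Context: A represented space $(X,\delta_X)$ is a set $X$ with a surjective partial map $\delta_X:\subseteq\mathbb{N}^\mathbb{N}\to X$. A problem $f:\subseteq X\rightrightarrows Y$ between represented spaces is a partial multi-valued map; $F:\subseteq\mathbb{N}^\mathbb{N}\to\mathbb{N}^\mathbb{N}$ realizes $f$ if $\delta_Y F(p)\in f(\delta_X(p))$ whenever $\delta_X(p)\in\mathrm{dom}(f)$; $f$ is computable if it has a computable realizer; $f$ is total if $\mathrm{dom}(f)=X$. For representations $\delta_1,\delta_2$ of the same set, $\delta_1\le\delta_2$ means $\delta_1=\delta_2F$ for some computable partial $F$, and $\equiv$ is the induced equivalence. A representation $\delta$ is precomplete if for every computable partial $F:\subseteq\mathbb{N}^\mathbb{N}\to\mathbb{N}^\mathbb{N}$ there is a total computable $G$ with $\delta F(p)=\delta G(p)$ for all $p\in\mathrm{dom}(F)$. For $p\in\mathbb{N}^\mathbb{N}$,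 $p-1$ denotes the finite or infinite sequence obtained by concatenating $p(0)-1,p(1)-1,\dots$, where $0-1$ is read as the empty word. The completion of $(X,\delta_X)$ is $\overline{X}=X\cup\{\bot\}$ ($\bot\notin X$) with the total representation $\delta_{\overline X}(p)=\delta_X(p-1)$ if $p-1$ is an infinite sequence in $\mathrm{dom}(\delta_X)$, and $\delta_{\overline X}(p)=\bot$ otherwise. For $Y\subseteq Z$, a (multi-valued) map $r:Z\rightrightarrows Y$ is a retraction if $r(y)=\{y\}$ for all $y\in Y$. *)

From Stdlib Require Import Arith List Classical ClassicalEpsilon.
Import ListNotations.

Set Implicit Arguments.

Definition baire := nat -> nat.

Inductive rfun : Type :=
| RZero : rfun
| RSucc : rfun
| RProj : nat -> rfun
| RComp : rfun -> list rfun -> rfun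
| RPrec : rfun -> rfun -> rfun
| RMu : rfun -> rfun.

Inductive reval : rfun -> list nat -> nat -> Prop :=
| e_zero v : reval RZero v 0
| e_succ v : reval RSucc v (S (hd 0 v))
| e_proj i v : reval (RProj i) v (nth i v 0)
| e_comp f gs v ws y : revals gs v ws -> reval f ws y -> reval (RComp f gs) v y
| e_prec0 f g v y : reval f v y -> reval (RPrec f g) (0 :: v) y
| e_precS f g n v r y :
    reval (RPrec f g) (n :: v) r -> reval g (n :: r :: v) y ->
    reval (RPrec f g) (S n :: v) y
| e_mu f v n : reval f (n :: v) 0 ->
    (forall m, m < n -> exists k, reval f (m :: v) (S k)) -> reval (RMu f) v n
with revals : list rfun -> list nat -> list nat -> Prop :=
| es_nil v : revals nil v nil
| es_cons g gs v y ys : reval g v y -> revals gs v ys -> revals (g :: gs) v (y :: ys).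

Definition computable_nat (a : nat -> nat) : Prop :=
  exists c : rfun, forall n, reval c [n] (a n).

Definition cpair (n m : nat) : nat := (n + m) * (n + m + 1) / 2 + m.

Fixpoint code_list (l : list nat) : nat :=
  match l with
  | [] => 0
  | x :: l' => S (cpair x (code_list l'))
  end.

Definition prefix (p : baire) (k : nat) : list nat := map p (seq 0 k).

(** [phi a p q]: the associate [a] applied to [p] yields [q]: for each n the
    output q n is read off at the first prefix on which a answers S (q n). *)
Definition phi (a : nat -> nat) (p q : baire) : Prop :=
  forall n, exists k,
    a (cpair n (code_list (prefix p k))) = S (q n) /\
    forall j, j < k -> a (cpair n (code_list (prefix p j))) = 0.

Definition comp_baire (F : baire -> option baire) : Prop :=
  exists a, computable_nat a /\ forall p q, F p = Some q -> phi a p q.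

Record rep_space : Type := RepSpace {
  carrier :> Type;
  delta : baire -> option carrier;
  delta_surj : forall x : carrier, exists p, delta p = Some x
}.

Definition id_rep : baire -> option baire := fun p => Some p.

Definition mv_dom {A B : Type} (f : A -> B -> Prop) (a : A) : Prop := exists b, f a b.

Definition mv_total {A B : Type} (f : A -> B -> Prop) : Prop := forall a, mv_dom f a.

Definition realizes {A B : Type} (dA : baire -> option A) (dB : baire -> option B)
  (F : baire -> option baire) (f : A -> B -> Prop) : Prop :=
  forall p a, dA p = Some a -> mv_dom f a ->
    exists q b, F p = Some q /\ dB q = Some b /\ f a b.

Definition computable_mv {A B : Type} (dA : baire -> option A) (dB : baire -> option B)
  (f : A -> B -> Prop) : Prop :=
  exists F, comp_baire F /\ realizes dA dB F f.

Definition graph_p {A B : Type} (f : A -> option B) : A -> B -> Prop :=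
  fun a b => f a = Some b.
Definition graph_t {A B : Type} (f : A -> B) : A -> B -> Prop :=
  fun a b => b = f a.

Definition rep_le {X : Type} (d1 d2 : baire -> option X) : Prop :=
  exists F, comp_baire F /\
    forall p, d1 p = match F p with Some q => d2 q | None => None end.

Definition rep_equiv {X : Type} (d1 d2 : baire -> option X) : Prop :=
  rep_le d1 d2 /\ rep_le d2 d1.

Definition precomplete {X : Type} (d : baire -> X) : Prop :=
  forall F, comp_baire F ->
    exists G : baire -> baire, comp_baire (fun p => Some (G p)) /\
      forall p q, F p = Some q -> d q = d (G p).

Fixpoint cnz (p : baire) (n : nat) : nat :=
  match n with
  | 0 => 0
  | S m => cnz p m + (if Nat.eqb (p m) 0 then 0 else 1)
  end.

(** [minus1 p q]: p-1 is the infinite sequence q (its k-th entry comes from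
    the k-th nonzero entry of p, decremented). *)
Definition minus1 (p q : baire) : Prop :=
  forall k, exists n, p n = S (q k) /\ cnz p n = k.

(** the representation of the completion  X̄ = option X  (None = ⊥) *)
Definition compl_delta (X : rep_space) (p : baire) : option (option X) :=
  match excluded_middle_informative
          (exists x : X, exists q, minus1 p q /\ delta X q = Some x) with
  | left H => Some (Some (proj1_sig (constructive_indefinite_description _ H)))
  | right _ => Some None
  end.

Definition mv_retraction {X : Type} (r : option X -> X -> Prop) : Prop :=
  mv_total r /\ forall x y, r (Some x) y <-> y = x.

From Stdlib Require Import Arith List Lia ClassicalEpsilon FunctionalExtensionality.
Import ListNotations.

(* (1) -> (2): compose a realizer of [f] with a translation into the
   precomplete representation and make it total by precompleteness.
   (2) -> (1): the total extension [g] of [delta X] itself is a total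
   representation equivalent to [delta X], and applying (2) to [g] after a
   partial computable map gives precompleteness.
   (2) <-> (3): a realizer of a problem [Y =>> X] read through [delta X] is a
   partial computable map from Baire space to [X], and any total computable
   extension of it refines the problem; Baire space is itself a represented
   space.
   (3) -> (4): refine the inclusion of the completion, which is computable
   since [p |-> p - 1] is.
   (4) -> (3): every partial computable [F] on Baire space is [p |-> E p - 1]
   for a total computable [E] (emit [S (F p j)] once it is known and [0] while
   waiting), so the retraction applied to [E p] realizes a total refinement. *)

(** * Mu-recursive functions on nat *)

Definition computable_nat2 (f : nat -> nat -> nat) : Prop :=
  exists c, forall x y, reval c [x; y] (f x y).
Definition computable_nat3 (f : nat -> nat -> nat -> nat) : Prop :=
  exists c, forall x y z, reval c [x; y; z] (f x y z).

Lemma computable_nat_ext f g :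
  computable_nat f -> (forall x, f x = g x) -> computable_nat g.
Proof. intros [c H] E; exists c; intro x; rewrite <- E; auto. Qed.
Lemma computable_nat2_ext f g :
  computable_nat2 f -> (forall x y, f x y = g x y) -> computable_nat2 g.
Proof. intros [c H] E; exists c; intros x y; rewrite <- E; auto. Qed.
Lemma computable_nat3_ext f g :
  computable_nat3 f -> (forall x y z, f x y z = g x y z) -> computable_nat3 g.
Proof. intros [c H] E; exists c; intros x y z; rewrite <- E; auto. Qed.

Lemma computable_S : computable_nat S.
Proof. exists RSucc; intro x; exact (e_succ [x]). Qed.
Lemma computable_nat_id : computable_nat (fun x => x).
Proof. exists (RProj 0); intro x; exact (e_proj 0 [x]). Qed.
Lemma computable_nat_zero : computable_nat (fun _ => 0).
Proof. exists RZero; intro x; exact (e_zero [x]). Qed.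
Lemma computable_nat2_fst : computable_nat2 (fun x y => x).
Proof. exists (RProj 0); intros x y; exact (e_proj 0 [x; y]). Qed.
Lemma computable_nat2_snd : computable_nat2 (fun x y => y).
Proof. exists (RProj 1); intros x y; exact (e_proj 1 [x; y]). Qed.
Lemma computable_nat3_proj1 : computable_nat3 (fun x y z => x).
Proof. exists (RProj 0); intros x y z; exact (e_proj 0 [x; y; z]). Qed.
Lemma computable_nat3_proj2 : computable_nat3 (fun x y z => y).
Proof. exists (RProj 1); intros x y z; exact (e_proj 1 [x; y; z]). Qed.
Lemma computable_nat3_proj3 : computable_nat3 (fun x y z => z).
Proof. exists (RProj 2); intros x y z; exact (e_proj 2 [x; y; z]). Qed.

Ltac compose_codes := eapply e_comp; [repeat econstructor; eauto | auto].

Lemma computable_nat_comp f g :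
  computable_nat f -> computable_nat g -> computable_nat (fun x => f (g x)).
Proof. intros [cf Hf] [cg Hg]; exists (RComp cf [cg]); intro x; compose_codes. Qed.
Lemma computable_nat_comp2 f g h : computable_nat2 f ->
  computable_nat g -> computable_nat h -> computable_nat (fun x => f (g x) (h x)).
Proof. intros [cf Hf] [cg Hg] [ch Hh]; exists (RComp cf [cg; ch]); intro x; compose_codes. Qed.
Lemma computable_nat_comp3 f g h k : computable_nat3 f -> computable_nat g ->
  computable_nat h -> computable_nat k -> computable_nat (fun x => f (g x) (h x) (k x)).
Proof.
  intros [cf Hf] [cg Hg] [ch Hh] [ck Hk]; exists (RComp cf [cg; ch; ck]); intro x.
  compose_codes.
Qed.
Lemma computable_nat2_comp f g :
  computable_nat f -> computable_nat2 g -> computable_nat2 (fun x y => f (g x y)).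
Proof. intros [cf Hf] [cg Hg]; exists (RComp cf [cg]); intros x y; compose_codes. Qed.
Lemma computable_nat2_comp2 f g h : computable_nat2 f ->
  computable_nat2 g -> computable_nat2 h -> computable_nat2 (fun x y => f (g x y) (h x y)).
Proof. intros [cf Hf] [cg Hg] [ch Hh]; exists (RComp cf [cg; ch]); intros x y; compose_codes. Qed.
Lemma computable_nat3_comp f g :
  computable_nat f -> computable_nat3 g -> computable_nat3 (fun x y z => f (g x y z)).
Proof. intros [cf Hf] [cg Hg]; exists (RComp cf [cg]); intros x y z; compose_codes. Qed.
Lemma computable_nat3_comp2 f g h : computable_nat2 f -> computable_nat3 g ->
  computable_nat3 h -> computable_nat3 (fun x y z => f (g x y z) (h x y z)).
Proof.
  intros [cf Hf] [cg Hg] [ch Hh]; exists (RComp cf [cg; ch]); intros x y z.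
  compose_codes.
Qed.
Lemma computable_nat3_comp3 f g h k : computable_nat3 f -> computable_nat3 g ->
  computable_nat3 h -> computable_nat3 k ->
  computable_nat3 (fun x y z => f (g x y z) (h x y z) (k x y z)).
Proof.
  intros [cf Hf] [cg Hg] [ch Hh] [ck Hk]; exists (RComp cf [cg; ch; ck]); intros x y z.
  compose_codes.
Qed.

Fixpoint primrec (b : nat -> nat) (s : nat -> nat -> nat -> nat) (n x : nat) : nat :=
  match n with 0 => b x | S i => s i (primrec b s i x) x end.

Lemma computable_nat2_primrec b s :
  computable_nat b -> computable_nat3 s -> computable_nat2 (primrec b s).
Proof.
  intros [cb Hb] [cs Hs]; exists (RPrec cb cs); intros n x.
  induction n; simpl.
  - apply e_prec0, Hb.
  - eapply e_precS; [exact IHn | apply Hs].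
Qed.

Lemma computable_nat_const k : computable_nat (fun _ => k).
Proof.
  induction k; [exact computable_nat_zero|].
  exact (computable_nat_comp S (fun _ => k) computable_S IHk).
Qed.
Lemma computable_nat2_const k : computable_nat2 (fun _ _ => k).
Proof. exact (computable_nat2_comp _ _ (computable_nat_const k) computable_nat2_fst). Qed.
Lemma computable_nat3_const k : computable_nat3 (fun _ _ _ => k).
Proof. exact (computable_nat3_comp _ _ (computable_nat_const k) computable_nat3_proj1). Qed.

Lemma computable_nat2_add : computable_nat2 Nat.add.
Proof.
  eapply computable_nat2_ext.
  - apply (computable_nat2_primrec (fun x => x) (fun _ r _ => S r)).
    + exact computable_nat_id.
    + exact (computable_nat3_comp _ _ computable_S computable_nat3_proj2).
  - intros n x; induction n; simpl; auto.
Qed.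

Lemma computable_nat2_mul : computable_nat2 Nat.mul.
Proof.
  eapply computable_nat2_ext.
  - apply (computable_nat2_primrec (fun _ => 0) (fun _ r x => r + x)).
    + exact computable_nat_zero.
    + exact (computable_nat3_comp2 _ _ _ computable_nat2_add
               computable_nat3_proj2 computable_nat3_proj3).
  - intros n x; induction n; simpl; lia.
Qed.

Lemma computable_pred : computable_nat pred.
Proof.
  eapply computable_nat_ext.
  - apply (computable_nat_comp2 (primrec (fun _ => 0) (fun i _ _ => i)) (fun x => x) (fun _ => 0)).
    + exact (computable_nat2_primrec _ _ computable_nat_zero computable_nat3_proj1).
    + exact computable_nat_id.
    + exact computable_nat_zero.
  - intros [|x]; reflexivity.
Qed.

Lemma computable_nat2_sub : computable_nat2 Nat.sub.
Proof.
  eapply computable_nat2_ext.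
  - apply (computable_nat2_comp2 (primrec (fun x => x) (fun _ r _ => pred r))
             (fun x y => y) (fun x y => x)).
    + apply computable_nat2_primrec; [exact computable_nat_id|].
      exact (computable_nat3_comp _ _ computable_pred computable_nat3_proj2).
    + exact computable_nat2_snd.
    + exact computable_nat2_fst.
  - intros x y; simpl; revert x; induction y; intros x; simpl; [lia|].
    rewrite IHy; lia.
Qed.

Definition ifnz (c a b : nat) : nat := if c =? 0 then b else a.
Definition leb01 (x y : nat) : nat := if x <=? y then 1 else 0.
Definition sgn (x : nat) : nat := ifnz x 1 0.
Definition eq01 (x y : nat) : nat := leb01 x y * leb01 y x.

Lemma ifnz_0 a b : ifnz 0 a b = b. Proof. reflexivity. Qed.
Lemma ifnz_S c a b : ifnz (S c) a b = a. Proof. reflexivity. Qed.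
Lemma ifnz_nz c a b : c <> 0 -> ifnz c a b = a.
Proof. destruct c; [congruence | reflexivity]. Qed.
Lemma leb01_true x y : x <= y -> leb01 x y = 1.
Proof. unfold leb01; destruct (Nat.leb_spec x y); lia. Qed.
Lemma leb01_false x y : y < x -> leb01 x y = 0.
Proof. unfold leb01; destruct (Nat.leb_spec x y); lia. Qed.
Lemma sgn_0 : sgn 0 = 0. Proof. reflexivity. Qed.
Lemma sgn_nz x : x <> 0 -> sgn x = 1. Proof. apply ifnz_nz. Qed.
Lemma eq01_refl x : eq01 x x = 1.
Proof. unfold eq01; rewrite leb01_true; auto. Qed.
Lemma eq01_neq x y : x <> y -> eq01 x y = 0.
Proof.
  intro; unfold eq01; destruct (Nat.lt_ge_cases x y).
  - rewrite (leb01_false y x); lia.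
  - rewrite (leb01_false x y); lia.
Qed.

Lemma computable_nat3_ifnz : computable_nat3 ifnz.
Proof.
  eapply computable_nat3_ext.
  - apply (computable_nat3_comp2 Nat.add (fun c a b => a * (1 - (1 - c)))
             (fun c a b => b * (1 - c)) computable_nat2_add).
    + apply (computable_nat3_comp2 Nat.mul); [exact computable_nat2_mul | exact computable_nat3_proj2|].
      apply (computable_nat3_comp2 Nat.sub); [exact computable_nat2_sub | apply computable_nat3_const|].
      apply (computable_nat3_comp2 Nat.sub); [exact computable_nat2_sub | apply computable_nat3_const|].
      exact computable_nat3_proj1.
    + apply (computable_nat3_comp2 Nat.mul); [exact computable_nat2_mul | exact computable_nat3_proj3|].
      apply (computable_nat3_comp2 Nat.sub); [exact computable_nat2_sub | apply computable_nat3_const|].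
      exact computable_nat3_proj1.
  - intros c a b; unfold ifnz; destruct (Nat.eqb_spec c 0); [subst; simpl; lia|].
    replace (1 - c) with 0 by lia; simpl; lia.
Qed.

Lemma computable_nat2_leb01 : computable_nat2 leb01.
Proof.
  eapply computable_nat2_ext.
  - exact (computable_nat2_comp2 Nat.sub (fun _ _ => 1) Nat.sub computable_nat2_sub
             (computable_nat2_const 1) computable_nat2_sub).
  - intros x y; unfold leb01; destruct (Nat.leb_spec x y); lia.
Qed.

Fixpoint tri (s : nat) : nat := match s with 0 => 0 | S s' => tri s' + S s' end.

Lemma tri_double s : 2 * tri s = s * (s + 1).
Proof. induction s; simpl tri; lia. Qed.

Lemma tri_mono a b : a <= b -> tri a <= tri b.
Proof. induction 1; simpl; lia. Qed.

Lemma cpair_tri n m : cpair n m = tri (n + m) + m.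
Proof.
  unfold cpair; f_equal; rewrite <- tri_double, Nat.mul_comm.
  apply Nat.div_mul; lia.
Qed.

Lemma computable_tri : computable_nat tri.
Proof.
  eapply computable_nat_ext.
  - apply (computable_nat_comp2 (primrec (fun _ => 0) (fun i r _ => r + S i)) (fun x => x) (fun _ => 0)).
    + apply computable_nat2_primrec; [exact computable_nat_zero|].
      apply computable_nat3_comp2; [exact computable_nat2_add | exact computable_nat3_proj2|].
      exact (computable_nat3_comp _ _ computable_S computable_nat3_proj1).
    + exact computable_nat_id.
    + exact computable_nat_zero.
  - intro x; induction x; simpl; auto.
Qed.

Lemma computable_nat2_cpair : computable_nat2 cpair.
Proof.
  eapply computable_nat2_ext.
  - apply (computable_nat2_comp2 Nat.add (fun n m => tri (n + m)) (fun n m => m)).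
    + exact computable_nat2_add.
    + exact (computable_nat2_comp _ _ computable_tri computable_nat2_add).
    + exact computable_nat2_snd.
  - intros; rewrite cpair_tri; auto.
Qed.

Fixpoint tri_root (z : nat) : nat :=
  match z with
  | 0 => 0
  | S z' => ifnz (leb01 (tri (S (tri_root z'))) (S z')) (S (tri_root z')) (tri_root z')
  end.

Lemma computable_tri_root : computable_nat tri_root.
Proof.
  eapply computable_nat_ext.
  - apply (computable_nat_comp2
             (primrec (fun _ => 0) (fun i r _ => ifnz (leb01 (tri (S r)) (S i)) (S r) r))
             (fun x => x) (fun _ => 0)).
    + apply computable_nat2_primrec; [exact computable_nat_zero|].
      apply computable_nat3_comp3; [exact computable_nat3_ifnz | | | exact computable_nat3_proj2].
      * apply computable_nat3_comp2; [exact computable_nat2_leb01 | |].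
        -- apply (computable_nat3_comp _ _ computable_tri).
           exact (computable_nat3_comp _ _ computable_S computable_nat3_proj2).
        -- exact (computable_nat3_comp _ _ computable_S computable_nat3_proj1).
      * exact (computable_nat3_comp _ _ computable_S computable_nat3_proj2).
    + exact computable_nat_id.
    + exact computable_nat_zero.
  - intro x; induction x; [reflexivity|]; cbn [primrec tri_root]; rewrite IHx; reflexivity.
Qed.

Lemma tri_root_spec z : tri (tri_root z) <= z < tri (S (tri_root z)).
Proof.
  induction z; simpl; [lia|]; unfold ifnz, leb01.
  destruct (Nat.leb_spec (tri (tri_root z) + S (tri_root z)) (S z)); simpl in *; lia.
Qed.

Lemma tri_root_unique z s : tri s <= z < tri (S s) -> tri_root z = s.
Proof.
  intros Hs; pose proof (tri_root_spec z) as Hd.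
  destruct (lt_eq_lt_dec (tri_root z) s) as [[Hl|He]|Hl]; auto.
  - pose proof (tri_mono (S (tri_root z)) s Hl); lia.
  - pose proof (tri_mono (S s) (tri_root z) Hl); lia.
Qed.

Definition unpair2 (z : nat) : nat := z - tri (tri_root z).
Definition unpair1 (z : nat) : nat := tri_root z - unpair2 z.

Lemma tri_root_cpair n m : tri_root (cpair n m) = n + m.
Proof. apply tri_root_unique; rewrite cpair_tri; simpl; lia. Qed.
Lemma unpair1_cpair n m : unpair1 (cpair n m) = n.
Proof. unfold unpair1, unpair2; rewrite tri_root_cpair, cpair_tri; lia. Qed.
Lemma unpair2_cpair n m : unpair2 (cpair n m) = m.
Proof. unfold unpair2; rewrite tri_root_cpair, cpair_tri; lia. Qed.

Lemma computable_unpair2 : computable_nat unpair2.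
Proof.
  apply (computable_nat_comp2 Nat.sub); [exact computable_nat2_sub | exact computable_nat_id|].
  exact (computable_nat_comp _ _ computable_tri computable_tri_root).
Qed.
Lemma computable_unpair1 : computable_nat unpair1.
Proof.
  exact (computable_nat_comp2 Nat.sub _ _ computable_nat2_sub computable_tri_root computable_unpair2).
Qed.

Section UnaryClosure.
Variables f g h : nat -> nat.
Hypotheses (Hf : computable_nat f) (Hg : computable_nat g) (Hh : computable_nat h).

Lemma computable_nat_succ : computable_nat (fun x => S (f x)).
Proof. exact (computable_nat_comp _ _ computable_S Hf). Qed.
Lemma computable_nat_pred : computable_nat (fun x => pred (f x)).
Proof. exact (computable_nat_comp _ _ computable_pred Hf). Qed.
Lemma computable_nat_unpair1 : computable_nat (fun x => unpair1 (f x)).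
Proof. exact (computable_nat_comp _ _ computable_unpair1 Hf). Qed.
Lemma computable_nat_unpair2 : computable_nat (fun x => unpair2 (f x)).
Proof. exact (computable_nat_comp _ _ computable_unpair2 Hf). Qed.
Lemma computable_nat_add : computable_nat (fun x => f x + g x).
Proof. exact (computable_nat_comp2 _ _ _ computable_nat2_add Hf Hg). Qed.
Lemma computable_nat_mul : computable_nat (fun x => f x * g x).
Proof. exact (computable_nat_comp2 _ _ _ computable_nat2_mul Hf Hg). Qed.
Lemma computable_nat_sub : computable_nat (fun x => f x - g x).
Proof. exact (computable_nat_comp2 _ _ _ computable_nat2_sub Hf Hg). Qed.
Lemma computable_nat_leb01 : computable_nat (fun x => leb01 (f x) (g x)).
Proof. exact (computable_nat_comp2 _ _ _ computable_nat2_leb01 Hf Hg). Qed.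
Lemma computable_nat_cpair : computable_nat (fun x => cpair (f x) (g x)).
Proof. exact (computable_nat_comp2 _ _ _ computable_nat2_cpair Hf Hg). Qed.
Lemma computable_nat_ifnz : computable_nat (fun x => ifnz (f x) (g x) (h x)).
Proof. exact (computable_nat_comp3 _ _ _ _ computable_nat3_ifnz Hf Hg Hh). Qed.
End UnaryClosure.

Ltac computable_base_step := lazymatch goal with
  | |- computable_nat (fun x => x) => exact computable_nat_id
  | |- computable_nat (fun _ => ?k) => exact (computable_nat_const k)
  | |- computable_nat (fun x => unpair1 _) => apply computable_nat_unpair1
  | |- computable_nat (fun x => unpair2 _) => apply computable_nat_unpair2
  | |- computable_nat (fun x => cpair _ _) => apply computable_nat_cpair
  | |- computable_nat (fun x => ifnz _ _ _) => apply computable_nat_ifnz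
  | |- computable_nat (fun x => leb01 _ _) => apply computable_nat_leb01
  | |- computable_nat (fun x => S _) => apply computable_nat_succ
  | |- computable_nat (fun x => pred _) => apply computable_nat_pred
  | |- computable_nat (fun x => _ + _) => apply computable_nat_add
  | |- computable_nat (fun x => _ * _) => apply computable_nat_mul
  | |- computable_nat (fun x => _ - _) => apply computable_nat_sub
  | |- computable_nat _ => first [ assumption | exact computable_unpair1 | exact computable_unpair2
                              | exact computable_pred | exact computable_S ]
  | |- _ => assumption
  end.
Ltac computable_base := repeat computable_base_step.

Definition computable_paired (G : nat -> nat -> nat) : Prop :=
  computable_nat (fun y => G (unpair1 y) (unpair2 y)).

Lemma computable_nat_paired_app G f g : computable_paired G ->
  computable_nat f -> computable_nat g -> computable_nat (fun x => G (f x) (g x)).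
Proof.
  intros HG Hf Hg; eapply computable_nat_ext.
  - exact (computable_nat_comp _ (fun x => cpair (f x) (g x)) HG (computable_nat_cpair _ _ Hf Hg)).
  - intro x; simpl; rewrite unpair1_cpair, unpair2_cpair; auto.
Qed.

Fixpoint pair_rec (b s : nat -> nat) (n w : nat) : nat :=
  match n with 0 => b w | S i => s (cpair i (cpair (pair_rec b s i w) w)) end.

Lemma computable_nat_pair_rec b s h g : computable_nat b -> computable_nat s ->
  computable_nat h -> computable_nat g -> computable_nat (fun x => pair_rec b s (h x) (g x)).
Proof.
  intros Hb Hs Hh Hg; eapply computable_nat_ext.
  - apply (computable_nat_comp2 (primrec b (fun i r w => s (cpair i (cpair r w)))) h g); auto.
    apply computable_nat2_primrec; auto.
    apply computable_nat3_comp; auto.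
    apply computable_nat3_comp2; [exact computable_nat2_cpair | exact computable_nat3_proj1|].
    exact (computable_nat3_comp2 _ _ _ computable_nat2_cpair computable_nat3_proj2 computable_nat3_proj3).
  - intro x; cbv beta; generalize (h x) (g x); intros n w.
    induction n; simpl; try rewrite IHn; auto.
Qed.

Ltac unpair_simpl := repeat first [rewrite unpair1_cpair | rewrite unpair2_cpair].

Lemma computable_nat_iter f h g : computable_nat f ->
  computable_nat h -> computable_nat g -> computable_nat (fun x => Nat.iter (h x) f (g x)).
Proof.
  intros Hf Hh Hg; eapply computable_nat_ext.
  - apply (computable_nat_pair_rec (fun w => w) (fun y => f (unpair1 (unpair2 y))) h g); auto.
    + exact computable_nat_id.
    + apply computable_nat_comp; auto; computable_base.
  - intro x; cbv beta; generalize (h x) (g x); intros n w.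
    induction n; simpl; unpair_simpl; congruence.
Qed.

(* [bmin P n] is the least [i < n] with [P i <> 0], or [n] if there is none. *)
Fixpoint bmin (P : nat -> nat) (n : nat) : nat :=
  match n with
  | 0 => 0
  | S k => ifnz (leb01 (S (bmin P k)) k) (bmin P k) (ifnz (P k) k (S k))
  end.

Lemma computable_nat_bmin P h g : computable_paired P ->
  computable_nat h -> computable_nat g -> computable_nat (fun x => bmin (P (g x)) (h x)).
Proof.
  intros HP Hh Hg; eapply computable_nat_ext.
  - apply (computable_nat_pair_rec (fun _ => 0)
      (fun y => ifnz (leb01 (S (unpair1 (unpair2 y))) (unpair1 y)) (unpair1 (unpair2 y))
                  (ifnz (P (unpair2 (unpair2 y)) (unpair1 y)) (unpair1 y) (S (unpair1 y)))) h g);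
      auto; [exact computable_nat_zero|].
    computable_base; apply computable_nat_paired_app; computable_base.
  - intro x; cbv beta; generalize (h x) (g x); intros n w.
    induction n; simpl; unpair_simpl; congruence.
Qed.

Lemma bmin_spec P n : bmin P n <= n /\ (forall i, i < bmin P n -> P i = 0) /\
  (bmin P n < n -> P (bmin P n) <> 0).
Proof.
  induction n as [|n [H1 [H2 H3]]]; simpl; [split; [lia | split; intros; lia]|].
  unfold leb01; destruct (Nat.leb_spec (S (bmin P n)) n); rewrite ?ifnz_0, ?ifnz_S.
  - split; [lia | split; auto].
  - assert (bmin P n = n) by lia; unfold ifnz; destruct (Nat.eqb_spec (P n) 0).
    + split; [lia | split; [|lia]].
      intros i Hi; destruct (Nat.eq_dec i n); subst; auto; apply H2; lia.
    + split; [lia | split; auto]; intros i Hi; apply H2; lia.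
Qed.

Lemma bmin_eq P n i : i < n -> P i <> 0 -> (forall j, j < i -> P j = 0) -> bmin P n = i.
Proof.
  intros Hi Pi Hj; destruct (bmin_spec P n) as [H1 [H2 H3]].
  destruct (lt_eq_lt_dec (bmin P n) i) as [[Hl|He]|Hl]; auto; exfalso.
  - apply H3; [lia | apply Hj; auto].
  - apply Pi, H2; auto.
Qed.

Lemma bmin_none P n : (forall j, j < n -> P j = 0) -> bmin P n = n.
Proof.
  intros Hj; destruct (bmin_spec P n) as [H1 [H2 H3]].
  destruct (Nat.eq_dec (bmin P n) n); auto; exfalso; apply H3; [lia | apply Hj; lia].
Qed.

Lemma bmin_ext P Q n : (forall i, i < n -> P i = Q i) -> bmin P n = bmin Q n.
Proof.
  induction n; intros H; simpl; auto.
  rewrite IHn by (intros; apply H; lia); rewrite H by lia; auto.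
Qed.

Fixpoint bcount (P : nat -> nat) (n : nat) : nat :=
  match n with 0 => 0 | S k => bcount P k + ifnz (P k) 1 0 end.

Lemma computable_nat_bcount P h g : computable_paired P ->
  computable_nat h -> computable_nat g -> computable_nat (fun x => bcount (P (g x)) (h x)).
Proof.
  intros HP Hh Hg; eapply computable_nat_ext.
  - apply (computable_nat_pair_rec (fun _ => 0)
      (fun y => unpair1 (unpair2 y) + ifnz (P (unpair2 (unpair2 y)) (unpair1 y)) 1 0) h g);
      auto; [exact computable_nat_zero|].
    computable_base; apply computable_nat_paired_app; computable_base.
  - intro x; cbv beta; generalize (h x) (g x); intros n w.
    induction n; simpl; unpair_simpl; congruence.
Qed.

Lemma bcount_zero P n : bcount P n = 0 <-> (forall i, i < n -> P i = 0).
Proof.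
  induction n as [|n IHn]; simpl; [split; intros; auto; lia|]; split.
  - intros H i Hi; destruct (Nat.eq_dec i n) as [->|]; [|apply IHn; lia].
    destruct (P n); auto; rewrite ifnz_S in H; lia.
  - intros H; rewrite (proj2 IHn) by (intros; apply H; lia); rewrite H by lia; reflexivity.
Qed.

Fixpoint tabulate_code_from (F : nat -> nat) (L t : nat) : nat :=
  match t with 0 => 0 | S t' => S (cpair (F (L - S t')) (tabulate_code_from F L t')) end.
Definition tabulate_code (F : nat -> nat) (L : nat) : nat := tabulate_code_from F L L.

Lemma computable_nat_tabulate_code G h g : computable_paired G ->
  computable_nat h -> computable_nat g -> computable_nat (fun x => tabulate_code (G (g x)) (h x)).
Proof.
  intros HG Hh Hg; eapply computable_nat_ext.
  - apply (computable_nat_pair_rec (fun _ => 0)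
      (fun y => S (cpair (G (unpair2 (unpair2 (unpair2 y)))
                            (unpair1 (unpair2 (unpair2 y)) - S (unpair1 y)))
                         (unpair1 (unpair2 y)))) h (fun x => cpair (h x) (g x)));
      auto; [exact computable_nat_zero | |].
    + computable_base; apply computable_nat_paired_app; computable_base.
    + computable_base.
  - intro x; cbv beta; unfold tabulate_code; generalize (h x) (g x); intros L w.
    generalize L at 1 4; intro n; induction n; simpl; unpair_simpl; congruence.
Qed.

Lemma tabulate_code_from_spec F L t :
  t <= L -> tabulate_code_from F L t = code_list (map F (seq (L - t) t)).
Proof.
  induction t; intros H; simpl; auto.
  rewrite IHt by lia; replace (L - t) with (S (L - S t)) by lia; reflexivity.
Qed.

Lemma tabulate_code_spec F L : tabulate_code F L = code_list (map F (seq 0 L)).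
Proof. unfold tabulate_code; rewrite tabulate_code_from_spec, Nat.sub_diag; auto. Qed.

(** * Codes of finite sequences *)

Definition code_hd (z : nat) : nat := unpair1 (pred z).
Definition code_tl (z : nat) : nat := unpair2 (pred z).
Definition code_drop (i z : nat) : nat := Nat.iter i code_tl z.
Definition code_nth (i z : nat) : nat := code_hd (code_drop i z).
Definition code_length (z : nat) : nat := bmin (fun i => 1 - code_drop i z) (S z).
Definition code_take (j c : nat) : nat := tabulate_code (fun i => code_nth i c) j.

Lemma computable_nat_code_drop f g : computable_nat f -> computable_nat g ->
  computable_nat (fun x => code_drop (f x) (g x)).
Proof. intros; apply computable_nat_iter; auto; unfold code_tl; computable_base. Qed.

Lemma computable_nat_code_nth f g : computable_nat f -> computable_nat g ->
  computable_nat (fun x => code_nth (f x) (g x)).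
Proof. intros; unfold code_nth, code_hd; computable_base; apply computable_nat_code_drop; auto. Qed.

Lemma computable_nat_code_length f : computable_nat f ->
  computable_nat (fun x => code_length (f x)).
Proof.
  intros; apply (computable_nat_bmin (fun z i => 1 - code_drop i z)); computable_base.
  unfold computable_paired; computable_base; apply computable_nat_code_drop; computable_base.
Qed.

Lemma computable_nat_code_take f g : computable_nat f -> computable_nat g ->
  computable_nat (fun x => code_take (f x) (g x)).
Proof.
  intros; apply (computable_nat_tabulate_code (fun c i => code_nth i c)); auto.
  apply computable_nat_code_nth; computable_base.
Qed.

Lemma computable_nat_sgn f : computable_nat f -> computable_nat (fun x => sgn (f x)).
Proof. intros; unfold sgn; computable_base. Qed.

Lemma computable_nat_eq01 f g : computable_nat f -> computable_nat g ->
  computable_nat (fun x => eq01 (f x) (g x)).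
Proof. intros; unfold eq01; computable_base. Qed.

Ltac computable_step := lazymatch goal with
  | |- computable_nat (fun x => code_take _ _) => apply computable_nat_code_take
  | |- computable_nat (fun x => code_length _) => apply computable_nat_code_length
  | |- computable_nat (fun x => code_nth _ _) => apply computable_nat_code_nth
  | |- computable_nat (fun x => code_drop _ _) => apply computable_nat_code_drop
  | |- computable_nat (fun x => sgn _) => apply computable_nat_sgn
  | |- computable_nat (fun x => eq01 _ _) => apply computable_nat_eq01
  | |- _ => computable_base_step
  end.
Ltac computable := repeat computable_step.

Lemma code_drop_skipn i l : code_drop i (code_list l) = code_list (skipn i l).
Proof.
  revert l; induction i as [|i IHi]; intros l; [reflexivity|].
  unfold code_drop in *; rewrite Nat.iter_succ_r; destruct l as [|x l].
  - change (code_tl (code_list [])) with (code_list []); rewrite IHi, !skipn_nil; reflexivity.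
  - unfold code_tl; simpl; rewrite unpair2_cpair; apply IHi.
Qed.

Lemma code_drop_eq0 i l : code_drop i (code_list l) = 0 <-> length l <= i.
Proof.
  rewrite code_drop_skipn; split.
  - intro H; destruct (skipn i l) eqn:E; [|discriminate].
    apply (f_equal (@length _)) in E; rewrite length_skipn in E; simpl in E; lia.
  - intro H; rewrite skipn_all2 by lia; reflexivity.
Qed.

Lemma code_nth_spec i l : code_nth i (code_list l) = nth i l 0.
Proof.
  unfold code_nth; rewrite code_drop_skipn; revert l.
  induction i; intros [|x l]; try reflexivity.
  - unfold code_hd; simpl; apply unpair1_cpair.
  - apply IHi.
Qed.

Lemma code_list_ge_length l : length l <= code_list l.
Proof. induction l; simpl; auto; rewrite cpair_tri; lia. Qed.

Lemma code_length_spec l : code_length (code_list l) = length l.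
Proof.
  unfold code_length; pose proof (code_list_ge_length l); apply bmin_eq; [lia| |].
  - assert (code_drop (length l) (code_list l) = 0) by (apply code_drop_eq0; lia); lia.
  - intros j Hj; assert (code_drop j (code_list l) <> 0) by (rewrite code_drop_eq0; lia); lia.
Qed.

Definition prefix_code (p : baire) (k : nat) : nat := code_list (prefix p k).

Lemma prefix_length p k : length (prefix p k) = k.
Proof. unfold prefix; rewrite length_map, length_seq; auto. Qed.

Lemma nth_prefix p k i : i < k -> nth i (prefix p k) 0 = p i.
Proof.
  intro H; unfold prefix.
  rewrite nth_indep with (d' := p 0) by (rewrite length_map, length_seq; auto).
  rewrite map_nth, seq_nth; auto.
Qed.

Lemma code_nth_prefix p k i : i < k -> code_nth i (prefix_code p k) = p i.
Proof. intro; unfold prefix_code; rewrite code_nth_spec, nth_prefix; auto. Qed.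
Lemma code_length_prefix p k : code_length (prefix_code p k) = k.
Proof. unfold prefix_code; rewrite code_length_spec, prefix_length; auto. Qed.
Lemma code_drop_prefix_eq0 p k i : code_drop i (prefix_code p k) = 0 <-> k <= i.
Proof. unfold prefix_code; rewrite code_drop_eq0, prefix_length; tauto. Qed.
Lemma prefix_code_ge p k : k <= prefix_code p k.
Proof. unfold prefix_code; rewrite <- (prefix_length p k) at 1; apply code_list_ge_length. Qed.

Lemma code_take_prefix p k j : j <= k -> code_take j (prefix_code p k) = prefix_code p j.
Proof.
  intro H; unfold code_take; rewrite tabulate_code_spec; unfold prefix_code, prefix at 2.
  f_equal; apply map_ext_in; intros i Hi; apply in_seq in Hi.
  fold (prefix_code p k); apply code_nth_prefix; lia.
Qed.

Lemma tabulate_code_prefix (F : nat -> nat) q L :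
  (forall m, m < L -> F m = q m) -> tabulate_code F L = prefix_code q L.
Proof.
  intro H; rewrite tabulate_code_spec; unfold prefix_code, prefix; f_equal.
  apply map_ext_in; intros i Hi; apply in_seq in Hi; apply H; lia.
Qed.

(** * Kleene associates *)

Lemma phi_intro a p q (K : nat -> nat) :
  (forall n, a (cpair n (prefix_code p (K n))) = S (q n)) ->
  (forall n j, j < K n -> a (cpair n (prefix_code p j)) = 0) -> phi a p q.
Proof. intros H1 H2 n; exists (K n); split; [apply H1 | intros; apply H2; auto]. Qed.

(* Answers query [(n, c)] with [S (p n)] as soon as [c] has more than [n] entries,
   which is what [code_drop n c <> 0] says. *)
Definition id_assoc (z : nat) : nat :=
  ifnz (code_drop (unpair1 z) (unpair2 z)) (S (code_nth (unpair1 z) (unpair2 z))) 0.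

Lemma id_assoc_computable : computable_nat id_assoc.
Proof. unfold id_assoc; computable. Qed.

Lemma id_assoc_phi p : phi id_assoc p p.
Proof.
  apply (phi_intro _ _ _ S); intros n; [|intros j Hj]; unfold id_assoc; unpair_simpl.
  - rewrite ifnz_nz, code_nth_prefix; auto; rewrite code_drop_prefix_eq0; lia.
  - replace (code_drop n (prefix_code p j)) with 0; [reflexivity|].
    symmetry; apply code_drop_prefix_eq0; lia.
Qed.

Lemma comp_baire_sub_id (F : baire -> option baire) :
  (forall p q, F p = Some q -> q = p) -> comp_baire F.
Proof.
  intro H; exists id_assoc; split; [exact id_assoc_computable|].
  intros p q E; rewrite (H p q E); apply id_assoc_phi.
Qed.

(* Running an associate [a] on a finite prefix [c]: output [m] is known once
   [a] answers query [m] on some prefix of [c]. *)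
Definition query_at (a : nat -> nat) (w j : nat) : nat :=
  a (cpair (unpair1 w) (code_take j (unpair2 w))).
Definition first_answer a m c := bmin (query_at a (cpair m c)) (S (code_length c)).
Definition answered a m c := leb01 (S (first_answer a m c)) (S (code_length c)).
Definition answer a m c := pred (a (cpair m (code_take (first_answer a m c) c))).
Definition all_answered a L c := 1 - bcount (fun m => 1 - answered a m c) L.
Definition answers_code a L c := tabulate_code (fun m => answer a m c) L.

Section RunComputable.
Variable a : nat -> nat.
Hypothesis Ha : computable_nat a.

Lemma computable_nat_first_answer f g : computable_nat f -> computable_nat g ->
  computable_nat (fun x => first_answer a (f x) (g x)).
Proof.
  intros; apply (computable_nat_bmin (query_at a)); computable.
  apply computable_nat_comp; computable.
Qed.

Lemma computable_nat_answered f g : computable_nat f -> computable_nat g ->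
  computable_nat (fun x => answered a (f x) (g x)).
Proof. intros; unfold answered; computable; apply computable_nat_first_answer; auto. Qed.

Lemma computable_nat_answer f g : computable_nat f -> computable_nat g ->
  computable_nat (fun x => answer a (f x) (g x)).
Proof.
  intros; unfold answer; apply computable_nat_pred, computable_nat_comp; computable.
  apply computable_nat_first_answer; auto.
Qed.

Lemma computable_nat_all_answered f g : computable_nat f -> computable_nat g ->
  computable_nat (fun x => all_answered a (f x) (g x)).
Proof.
  intros; unfold all_answered; computable.
  apply (computable_nat_bcount (fun c m => 1 - answered a m c)); auto.
  unfold computable_paired; computable.
  apply (computable_nat_answered _ _ computable_unpair2 computable_unpair1).
Qed.

Lemma computable_nat_answers_code f g : computable_nat f -> computable_nat g ->
  computable_nat (fun x => answers_code a (f x) (g x)).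
Proof.
  intros; apply (computable_nat_tabulate_code (fun c m => answer a m c)); auto.
  apply (computable_nat_answer _ _ computable_unpair2 computable_unpair1).
Qed.
End RunComputable.

Definition comp_ready a b z L :=
  all_answered a L (unpair2 z) * b (cpair (unpair1 z) (answers_code a L (unpair2 z))).
Definition comp_length a b z := bmin (comp_ready a b z) (S (code_length (unpair2 z))).
(* The associate of the composition: feed [b] the longest prefix of the output
   of [a] that is already known, and wait until [b] answers. *)
Definition comp_assoc a b z :=
  ifnz (leb01 (comp_length a b z) (code_length (unpair2 z)))
       (b (cpair (unpair1 z) (answers_code a (comp_length a b z) (unpair2 z)))) 0.

Lemma comp_assoc_computable a b :
  computable_nat a -> computable_nat b -> computable_nat (comp_assoc a b).
Proof.
  intros Ha Hb.
  assert (HL : computable_nat (comp_length a b)).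
  { apply (computable_nat_bmin (comp_ready a b) (fun z => S (code_length (unpair2 z))) (fun z => z));
      computable.
    unfold computable_paired, comp_ready; apply computable_nat_mul.
    - apply computable_nat_all_answered; computable.
    - apply computable_nat_comp; computable; apply computable_nat_answers_code; computable. }
  unfold comp_assoc; computable.
  apply computable_nat_comp; computable; apply computable_nat_answers_code; computable.
Qed.

Lemma phi_modulus a p q : phi a p q -> exists K : nat -> nat,
  (forall n, a (cpair n (prefix_code p (K n))) = S (q n)) /\
  (forall n j, j < K n -> a (cpair n (prefix_code p j)) = 0).
Proof.
  intro H; exists (fun n => proj1_sig (constructive_indefinite_description _ (H n))).
  split; intro n; destruct (constructive_indefinite_description _ (H n)) as [k [H1 H2]]; auto.
Qed.

Section RunSemantics.
Variables (a : nat -> nat) (p q : baire) (K : nat -> nat).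
Hypothesis K_answer : forall n, a (cpair n (prefix_code p (K n))) = S (q n).
Hypothesis K_least : forall n j, j < K n -> a (cpair n (prefix_code p j)) = 0.

Lemma first_answer_prefix m k :
  first_answer a m (prefix_code p k) = if K m <=? k then K m else S k.
Proof.
  unfold first_answer; rewrite code_length_prefix.
  rewrite (bmin_ext _ (fun j => a (cpair m (prefix_code p j)))).
  2:{ intros i Hi; unfold query_at; unpair_simpl; rewrite code_take_prefix; auto; lia. }
  destruct (Nat.leb_spec (K m) k).
  - apply bmin_eq; [lia | rewrite K_answer; lia | apply K_least].
  - apply bmin_none; intros; apply K_least; lia.
Qed.

Lemma answered_prefix m k :
  answered a m (prefix_code p k) = if K m <=? k then 1 else 0.
Proof.
  unfold answered; rewrite first_answer_prefix, code_length_prefix.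
  destruct (Nat.leb_spec (K m) k); [apply leb01_true | apply leb01_false]; lia.
Qed.

Lemma answer_prefix m k : K m <= k -> answer a m (prefix_code p k) = q m.
Proof.
  intro Hk; unfold answer; rewrite first_answer_prefix.
  destruct (Nat.leb_spec (K m) k); [|lia].
  rewrite code_take_prefix, K_answer by auto; reflexivity.
Qed.

(* [max_upto K L] is the largest of [K 0, ..., K (L - 1)]: how much input is
   needed to know the first [L] outputs. *)
Fixpoint max_upto (L : nat) : nat :=
  match L with 0 => 0 | S L' => max (max_upto L') (K L') end.

Lemma max_upto_le L k : max_upto L <= k <-> (forall m, m < L -> K m <= k).
Proof.
  induction L; simpl; [split; intros; lia|].
  rewrite Nat.max_lub_iff, IHL; split.
  - intros [H1 H2] m Hm; destruct (Nat.eq_dec m L); subst; auto; apply H1; lia.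
  - intros H; split; auto.
Qed.

Lemma all_answered_prefix L k :
  all_answered a L (prefix_code p k) = if max_upto L <=? k then 1 else 0.
Proof.
  unfold all_answered.
  assert (E : bcount (fun m => 1 - answered a m (prefix_code p k)) L = 0 <-> max_upto L <= k).
  { rewrite bcount_zero, max_upto_le; split; intros H m Hm; specialize (H m Hm);
      rewrite answered_prefix in *; destruct (Nat.leb_spec (K m) k); lia. }
  destruct (Nat.leb_spec (max_upto L) k); [rewrite (proj2 E) by auto; lia|].
  assert (bcount (fun m => 1 - answered a m (prefix_code p k)) L <> 0) by (rewrite E; lia); lia.
Qed.

Lemma answers_code_prefix L k :
  max_upto L <= k -> answers_code a L (prefix_code p k) = prefix_code q L.
Proof.
  intro Hm; apply tabulate_code_prefix; intros m Hl.
  apply answer_prefix, max_upto_le with (L := L); auto.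
Qed.
End RunSemantics.

Lemma comp_assoc_phi a b p q r : phi a p q -> phi b q r -> phi (comp_assoc a b) p r.
Proof.
  intros Hpa Hpb.
  destruct (phi_modulus _ _ _ Hpa) as [K [K1 K2]], (phi_modulus _ _ _ Hpb) as [Kb [B1 B2]].
  assert (ready : forall n k L, L <= k -> comp_ready a b (cpair n (prefix_code p k)) L =
      if max_upto K L <=? k then b (cpair n (prefix_code q L)) else 0).
  { intros n k L HL; unfold comp_ready; unpair_simpl.
    rewrite (all_answered_prefix a p q K K1 K2).
    destruct (Nat.leb_spec (max_upto K L) k); [|lia].
    rewrite (answers_code_prefix a p q K K1 K2) by auto; lia. }
  apply (phi_intro _ _ _ (fun n => max (Kb n) (max_upto K (Kb n)))); intro n; [|intros j Hj];
    unfold comp_assoc, comp_length; unpair_simpl; rewrite code_length_prefix.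
  - set (k := max (Kb n) (max_upto K (Kb n))).
    assert (E : bmin (comp_ready a b (cpair n (prefix_code p k))) (S k) = Kb n).
    { apply bmin_eq; [lia| |].
      - rewrite ready by lia; destruct (Nat.leb_spec (max_upto K (Kb n)) k); [|lia].
        rewrite B1; lia.
      - intros j Hj; rewrite ready by lia; destruct (max_upto K j <=? k); auto. }
    rewrite E, leb01_true, ifnz_S by lia.
    rewrite (answers_code_prefix a p q K K1 K2) by lia; auto.
  - assert (E : bmin (comp_ready a b (cpair n (prefix_code p j))) (S j) = S j).
    { apply bmin_none; intros L HL; rewrite ready by lia.
      destruct (Nat.leb_spec (max_upto K L) j); auto.
      destruct (Nat.lt_ge_cases L (Kb n)); [apply B2; auto|].
      enough (max_upto K (Kb n) <= j) by lia.
      apply max_upto_le; intros m Hm; apply (max_upto_le K L); auto; lia. }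
    rewrite E, leb01_false by lia; reflexivity.
Qed.

Lemma comp_baire_comp (F G : baire -> option baire) : comp_baire F -> comp_baire G ->
  comp_baire (fun p => match F p with Some q => G q | None => None end).
Proof.
  intros [a [Ha HF]] [b [Hb HG]]; exists (comp_assoc a b).
  split; [apply comp_assoc_computable; auto|].
  intros p r E; destruct (F p) as [q|] eqn:Fp; [|discriminate].
  apply (comp_assoc_phi a b p q r); auto.
Qed.

(** * Computing [p - 1] *)

Lemma cnz_mono p i j : i <= j -> cnz p i <= cnz p j.
Proof. induction 1; simpl; lia. Qed.

Lemma cnz_lt p i j : p i <> 0 -> i < j -> cnz p i < cnz p j.
Proof.
  intros H Hij; pose proof (cnz_mono p (S i) j Hij); simpl in *.
  destruct (Nat.eqb_spec (p i) 0); lia.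
Qed.

Lemma cnz_gap p x y : x <= y -> (forall i, x <= i < y -> p i = 0) -> cnz p y = cnz p x.
Proof.
  induction 1 as [|y Hxy IH]; intros H; auto; simpl.
  rewrite IH by (intros; apply H; lia); rewrite (H y) by lia; simpl; lia.
Qed.

Lemma minus1_unique p q1 q2 : minus1 p q1 -> minus1 p q2 -> q1 = q2.
Proof.
  intros H1 H2; apply functional_extensionality; intro k.
  destruct (H1 k) as [n1 [A1 B1]], (H2 k) as [n2 [A2 B2]].
  destruct (lt_eq_lt_dec n1 n2) as [[Hl|<-]|Hl].
  - pose proof (cnz_lt p n1 n2 ltac:(congruence) Hl); lia.
  - congruence.
  - pose proof (cnz_lt p n2 n1 ltac:(congruence) Hl); lia.
Qed.

Definition code_cnz (j c : nat) : nat := bcount (fun i => code_nth i c) j.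
(* Query (n, c): is position [j] of [c] the [n]-th nonzero entry? *)
Definition nth_nonzero_at (z j : nat) : nat :=
  sgn (code_drop j (unpair2 z)) * sgn (code_nth j (unpair2 z)) *
  eq01 (code_cnz j (unpair2 z)) (unpair1 z).
(* Its answer is the entry [S (q n)] itself, which is exactly the K2 encoding of
   [q n]. *)
Definition unpad_assoc (z : nat) : nat :=
  ifnz (leb01 (S (bmin (nth_nonzero_at z) (unpair2 z))) (unpair2 z))
       (code_nth (bmin (nth_nonzero_at z) (unpair2 z)) (unpair2 z)) 0.

Lemma unpad_assoc_computable : computable_nat unpad_assoc.
Proof.
  assert (computable_nat (fun z => bmin (nth_nonzero_at z) (unpair2 z))).
  { apply (computable_nat_bmin nth_nonzero_at unpair2 (fun z => z)); computable.
    unfold computable_paired, nth_nonzero_at, code_cnz; computable.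
    apply (computable_nat_bcount (fun c i => code_nth i c)); unfold computable_paired; computable. }
  unfold unpad_assoc; computable.
Qed.

Lemma code_cnz_prefix p k j : j <= k -> code_cnz j (prefix_code p k) = cnz p j.
Proof.
  induction j; intro H; simpl; auto; unfold code_cnz in *; simpl.
  rewrite IHj, code_nth_prefix by lia; destruct (p j); auto.
Qed.

Lemma unpad_assoc_phi p q : minus1 p q -> phi unpad_assoc p q.
Proof.
  intro Hm.
  destruct (choice (fun k n => p n = S (q k) /\ cnz p n = k) Hm) as [J HJ].
  assert (J_unique : forall n j, p j <> 0 -> cnz p j = n -> j = J n).
  { intros n j H1 H2; destruct (HJ n) as [E1 E2].
    destruct (lt_eq_lt_dec j (J n)) as [[Hl|He]|Hl]; auto.
    - pose proof (cnz_lt p j (J n) H1 Hl); lia.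
    - pose proof (cnz_lt p (J n) j ltac:(congruence) Hl); lia. }
  assert (at_J : forall n k j,
    nth_nonzero_at (cpair n (prefix_code p k)) j = if andb (j <? k) (j =? J n) then 1 else 0).
  { intros n k j; unfold nth_nonzero_at; unpair_simpl.
    destruct (Nat.ltb_spec j k).
    2:{ replace (code_drop j (prefix_code p k)) with 0; [reflexivity|].
        symmetry; apply code_drop_prefix_eq0; lia. }
    rewrite (sgn_nz (code_drop j _)) by (rewrite code_drop_prefix_eq0; lia).
    rewrite code_nth_prefix, code_cnz_prefix by lia.
    destruct (Nat.eqb_spec j (J n)) as [->|Hne]; cbn [andb].
    - destruct (HJ n) as [-> ->]; rewrite sgn_nz, eq01_refl by lia; reflexivity.
    - destruct (Nat.eq_dec (p j) 0) as [->|E]; [rewrite sgn_0; lia|].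
      rewrite eq01_neq by (intro; apply Hne, (J_unique n); auto); lia. }
  apply (phi_intro _ _ _ (fun n => S (J n))); intro n; [|intros j Hj];
    unfold unpad_assoc; unpair_simpl.
  - pose proof (prefix_code_ge p (S (J n))).
    assert (E : bmin (nth_nonzero_at (cpair n (prefix_code p (S (J n))))) (prefix_code p (S (J n)))
                = J n).
    { apply bmin_eq; [lia | rewrite at_J, (proj2 (Nat.ltb_lt _ _)), Nat.eqb_refl by lia; simpl; lia|].
      intros j Hj; rewrite at_J, (proj2 (Nat.eqb_neq _ _)) by lia.
      destruct (j <? S (J n)); auto. }
    rewrite E, leb01_true, ifnz_S, code_nth_prefix by lia; apply HJ.
  - assert (E : bmin (nth_nonzero_at (cpair n (prefix_code p j))) (prefix_code p j)
                = prefix_code p j).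
    { apply bmin_none; intros i Hi; rewrite at_J.
      destruct (Nat.ltb_spec i j); simpl; auto; destruct (Nat.eqb_spec i (J n)); lia. }
    rewrite E, leb01_false by lia; reflexivity.
Qed.

Definition unpad (p : baire) : option baire :=
  match excluded_middle_informative (exists q, minus1 p q) with
  | left H => Some (proj1_sig (constructive_indefinite_description _ H))
  | right _ => None
  end.

Lemma unpad_minus1 p q : minus1 p q -> unpad p = Some q.
Proof.
  intro Hm; unfold unpad; destruct excluded_middle_informative as [H|H]; [|exfalso; eauto].
  destruct (constructive_indefinite_description _ H) as [q' Hq']; simpl.
  rewrite (minus1_unique p q' q); auto.
Qed.

Lemma comp_baire_unpad : comp_baire unpad.
Proof.
  exists unpad_assoc; split; [exact unpad_assoc_computable|].
  intros p q E; unfold unpad in E; destruct excluded_middle_informative as [H|H]; [|discriminate].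
  injection E as <-; destruct (constructive_indefinite_description _ H); apply unpad_assoc_phi; auto.
Qed.

(** * Padding a partial computation into a total one *)

(* Entry [m] of [pad a p] is [S (q j)] when [m - j] is exactly the input length
   first needed to know outputs [0..j] of [a] on [p]; all other entries are 0. *)
Definition pad_ready (a : nat -> nat) (w j : nat) : nat :=
  all_answered a (S j) (code_take (unpair1 w - j) (unpair2 w)) *
  ifnz (unpair1 w - j) (1 - all_answered a (S j) (code_take (unpair1 w - j - 1) (unpair2 w))) 1.
Definition pad_entry a m c :=
  ifnz (leb01 (bmin (pad_ready a (cpair m c)) (S m)) m)
       (S (answer a (bmin (pad_ready a (cpair m c)) (S m)) c)) 0.
Definition pad a (p : baire) (m : nat) : nat := pad_entry a m (prefix_code p (S m)).
Definition pad_assoc a z :=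
  ifnz (leb01 (S (unpair1 z)) (code_length (unpair2 z))) (S (pad_entry a (unpair1 z) (unpair2 z))) 0.

Lemma pad_assoc_computable a : computable_nat a -> computable_nat (pad_assoc a).
Proof.
  intro Ha.
  assert (computable_nat (fun z => bmin (pad_ready a (cpair (unpair1 z) (unpair2 z))) (S (unpair1 z)))).
  { apply (computable_nat_bmin (pad_ready a) (fun z => S (unpair1 z))
             (fun z => cpair (unpair1 z) (unpair2 z))); computable.
    unfold computable_paired, pad_ready; apply computable_nat_mul.
    - apply computable_nat_all_answered; computable.
    - computable; apply computable_nat_all_answered; computable. }
  unfold pad_assoc, pad_entry; computable; apply computable_nat_answer; computable.
Qed.

Lemma pad_assoc_phi a p : phi (pad_assoc a) p (pad a p).
Proof.
  apply (phi_intro _ _ _ S); intro m; [|intros j Hj]; unfold pad_assoc; unpair_simpl;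
    rewrite code_length_prefix.
  - rewrite leb01_true, ifnz_S by lia; reflexivity.
  - rewrite leb01_false by lia; reflexivity.
Qed.

Section PadSemantics.
Variables (a : nat -> nat) (p q : baire) (K : nat -> nat).
Hypothesis K_answer : forall n, a (cpair n (prefix_code p (K n))) = S (q n).
Hypothesis K_least : forall n j, j < K n -> a (cpair n (prefix_code p j)) = 0.

Definition pad_pos (j : nat) : nat := max_upto K (S j) + j.

Lemma pad_pos_lt j j' : j < j' -> pad_pos j < pad_pos j'.
Proof.
  unfold pad_pos; intro H.
  assert (max_upto K (S j) <= max_upto K (S j')) by (induction H; simpl in *; lia); lia.
Qed.

Lemma pad_ready_prefix m j :
  j <= m -> pad_ready a (cpair m (prefix_code p (S m))) j = if pad_pos j =? m then 1 else 0.
Proof.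
  intro H; unfold pad_ready, pad_pos; unpair_simpl.
  rewrite code_take_prefix, (all_answered_prefix a p q K K_answer K_least) by lia.
  destruct (Nat.leb_spec (max_upto K (S j)) (m - j)).
  - destruct (m - j) as [|d] eqn:E; rewrite ?ifnz_0, ?ifnz_S.
    + rewrite (proj2 (Nat.eqb_eq _ _)) by lia; reflexivity.
    + rewrite code_take_prefix, (all_answered_prefix a p q K K_answer K_least) by lia.
      destruct (Nat.leb_spec (max_upto K (S j)) (S d - 1)).
      * rewrite (proj2 (Nat.eqb_neq _ _)) by lia; lia.
      * rewrite (proj2 (Nat.eqb_eq _ _)) by lia; reflexivity.
  - rewrite (proj2 (Nat.eqb_neq _ _)) by lia; lia.
Qed.

Lemma pad_at_pos j : pad a p (pad_pos j) = S (q j).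
Proof.
  unfold pad, pad_entry; set (m := pad_pos j).
  assert (Hj : j <= m) by (unfold m, pad_pos; lia).
  assert (E : bmin (pad_ready a (cpair m (prefix_code p (S m)))) (S m) = j).
  { apply bmin_eq; [lia | rewrite pad_ready_prefix, Nat.eqb_refl by auto; lia|].
    intros i Hi; rewrite pad_ready_prefix by lia; pose proof (pad_pos_lt i j Hi).
    rewrite (proj2 (Nat.eqb_neq _ _)); auto; unfold m; lia. }
  rewrite E, leb01_true, ifnz_S by auto; f_equal.
  apply (answer_prefix a p q K K_answer K_least).
  assert (K j <= max_upto K (S j)) by (simpl; lia); unfold m, pad_pos; lia.
Qed.

Lemma pad_off_pos m : (forall j, pad_pos j <> m) -> pad a p m = 0.
Proof.
  intro H; unfold pad, pad_entry.
  assert (E : bmin (pad_ready a (cpair m (prefix_code p (S m)))) (S m) = S m).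
  { apply bmin_none; intros j Hj; rewrite pad_ready_prefix by lia.
    specialize (H j); destruct (Nat.eqb_spec (pad_pos j) m); tauto. }
  rewrite E, leb01_false by lia; reflexivity.
Qed.

Lemma pad_minus1 : minus1 (pad a p) q.
Proof.
  intro k; exists (pad_pos k); split; [apply pad_at_pos|].
  induction k as [|k IHk].
  - rewrite (cnz_gap _ 0 (pad_pos 0)); [reflexivity | lia|].
    intros i Hi; apply pad_off_pos; intros [|j] Ej; [lia|].
    pose proof (pad_pos_lt 0 (S j)); lia.
  - pose proof (pad_pos_lt k (S k)).
    rewrite (cnz_gap _ (S (pad_pos k)) (pad_pos (S k))); [|lia|].
    + simpl; rewrite IHk, pad_at_pos; simpl; lia.
    + intros i Hi; apply pad_off_pos; intros j Ej.
      destruct (lt_eq_lt_dec j k) as [[Hl|Hl]|Hl]; [pose proof (pad_pos_lt j k Hl); lia | subst; lia|].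
      destruct (Nat.eq_dec j (S k)) as [->|]; [lia|].
      pose proof (pad_pos_lt (S k) j); lia.
Qed.
End PadSemantics.

Lemma comp_baire_pad F : comp_baire F ->
  exists E : baire -> baire, comp_baire (fun p => Some (E p)) /\
    forall p q, F p = Some q -> minus1 (E p) q.
Proof.
  intros [a [Ha HF]]; exists (pad a); split.
  - exists (pad_assoc a); split; [apply pad_assoc_computable; auto|].
    intros p q E; injection E as <-; apply pad_assoc_phi.
  - intros p q E; destruct (phi_modulus _ _ _ (HF p q E)) as [K [K1 K2]].
    exact (pad_minus1 a p q K K1 K2).
Qed.

Lemma compl_delta_minus1 (X : rep_space) p q x :
  minus1 p q -> delta X q = Some x -> compl_delta X p = Some (Some x).
Proof.
  intros Hm Hd; unfold compl_delta; destruct excluded_middle_informative as [H|H]; [|exfalso; eauto].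
  destruct (constructive_indefinite_description _ H) as [x' [q' [Hm' Hd']]]; simpl.
  rewrite (minus1_unique p q q' Hm Hm') in Hd; congruence.
Qed.

Lemma compl_delta_Some (X : rep_space) p x :
  compl_delta X p = Some (Some x) -> exists q, minus1 p q /\ delta X q = Some x.
Proof.
  unfold compl_delta; destruct excluded_middle_informative as [H|H]; [|discriminate].
  destruct (constructive_indefinite_description _ H) as [x' Hx']; simpl; intro E; injection E as <-; auto.
Qed.

Lemma compl_delta_total (X : rep_space) p : exists o, compl_delta X p = Some o.
Proof. unfold compl_delta; destruct excluded_middle_informative; eauto. Qed.

Lemma compl_delta_surj (X : rep_space) (o : option X) : exists p, compl_delta X p = Some o.
Proof.
  destruct o as [x|].
  - destruct (delta_surj X x) as [q Hq]; exists (fun n => S (q n)).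
    apply (compl_delta_minus1 X _ q); auto; intro k; exists k; split; auto.
    induction k; simpl; auto; rewrite IHk; simpl; lia.
  - exists (fun _ => 0); unfold compl_delta; destruct excluded_middle_informative as [H|H]; auto.
    exfalso; destruct H as [x [q [Hm _]]]; destruct (Hm 0) as [n [E _]]; discriminate.
Qed.

Definition completion (X : rep_space) : rep_space := RepSpace (compl_delta X) (compl_delta_surj X).
Definition baire_space : rep_space := RepSpace id_rep (fun p => ex_intro _ p eq_refl).

Lemma computable_delta_after (X : rep_space) F : comp_baire F ->
  computable_mv id_rep (delta X)
    (graph_p (fun p => match F p with Some q => delta X q | None => None end)).
Proof.
  intros HF; exists F; split; auto; intros p a Ep [x Ex]; injection Ep as <-.
  unfold graph_p in *; destruct (F p) as [q|]; [|discriminate].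
  exists q, x; auto.
Qed.

Lemma total_realizer (X : rep_space) (g : baire -> X) :
  computable_mv id_rep (delta X) (graph_t g) <->
  exists H, comp_baire H /\ forall p, exists q, H p = Some q /\ delta X q = Some (g p).
Proof.
  split; intros [H [HH HR]]; exists H; split; auto.
  - intro p; destruct (HR p p eq_refl (ex_intro _ (g p) eq_refl)) as [q [b [E1 [E2 ->]]]]; eauto.
  - intros p a Ep _; injection Ep as <-; destruct (HR p) as [q [E1 E2]].
    exists q, (g p); unfold graph_t; auto.
Qed.

Lemma comp_baire_total (H : baire -> option baire) (G : baire -> baire) :
  comp_baire H -> (forall p, H p = Some (G p)) -> comp_baire (fun p => Some (G p)).
Proof. intros [a [Ha HH]] E; exists a; split; auto; intros p q Eq; injection Eq as <-; auto. Qed.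

Section Equivalences.
Variable X : rep_space.

Definition precomplete_representable := exists d : baire -> X,
  (forall x : X, exists p, d p = x) /\ precomplete d /\ rep_equiv (fun p => Some (d p)) (delta X).
Definition total_extension_property := forall f : baire -> option X,
  computable_mv id_rep (delta X) (graph_p f) ->
  exists g : baire -> X, computable_mv id_rep (delta X) (graph_t g) /\
    forall p x, f p = Some x -> g p = x.
Definition total_refinement_property := forall (Y : rep_space) (f : Y -> X -> Prop),
  computable_mv (delta Y) (delta X) f ->
  exists g : Y -> X -> Prop, mv_total g /\ computable_mv (delta Y) (delta X) g /\
    forall y, mv_dom f y -> forall x, g y x -> f y x.
Definition multi_retraceable := exists r : option X -> X -> Prop,
  mv_retraction r /\ computable_mv (compl_delta X) (delta X) r.

Lemma precomplete_total_extension :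
  precomplete_representable -> total_extension_property.
Proof.
  intros [d [_ [Hpre [[K [HK EK]] [H [HH EH]]]]]] f [F [HF HR]].
  destruct (Hpre (fun p => match F p with Some q => H q | None => None end)) as [G [HG EG]].
  { apply comp_baire_comp; auto. }
  exists (fun p => d (G p)); split.
  - apply total_realizer; exists (fun p => match Some (G p) with Some q => K q | None => None end).
    split; [apply (comp_baire_comp (fun p => Some (G p)) K); auto|].
    intro p; specialize (EK (G p)); destruct (K (G p)) as [q|]; [eauto | discriminate].
  - intros p x Ep; destruct (HR p p eq_refl (ex_intro _ x Ep)) as [q' [b [E1 [E2 E3]]]].
    unfold graph_p in E3; rewrite E3 in Ep; injection Ep as ->.
    specialize (EH q'); rewrite E2 in EH; destruct (H q') as [q''|] eqn:E; [|discriminate].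
    injection EH as ->; symmetry; apply EG; rewrite E1; auto.
Qed.

Lemma total_extension_precomplete :
  total_extension_property -> precomplete_representable.
Proof.
  intros Hext.
  destruct (Hext (delta X)) as [g [Hg g_ext]].
  { apply (computable_delta_after X (fun p => Some p)), comp_baire_sub_id; congruence. }
  apply total_realizer in Hg; destruct Hg as [H [HH HHr]].
  exists g; split; [|split].
  - intro x; destruct (delta_surj X x) as [p Hp]; eauto.
  - intros F HF.
    destruct (Hext (fun p => match F p with Some q => Some (g q) | None => None end)) as [h [Hh h_ext]].
    { exists (fun p => match F p with Some q => H q | None => None end).
      split; [apply comp_baire_comp; auto|].
      intros p b Ep [x Ex]; injection Ep as <-; unfold graph_p in *.
      destruct (F p) as [q|]; [injection Ex as <- | discriminate].
      destruct (HHr q) as [q' [E1 E2]]; exists q', (g q); auto. }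
    apply total_realizer in Hh; destruct Hh as [H' [HH' HHr']].
    destruct (choice _ HHr') as [G HG].
    exists G; split; [apply (comp_baire_total H'); auto; apply HG|].
    intros p q E; destruct (HG p) as [_ E2].
    rewrite (g_ext _ _ E2); symmetry; apply h_ext; rewrite E; auto.
  - split.
    + exists H; split; auto; intro p; destruct (HHr p) as [q [-> E2]]; auto.
    + exists (fun p => match delta X p with Some _ => Some p | None => None end); split.
      * apply comp_baire_sub_id; intros p q E; destruct (delta X p); congruence.
      * intro p; destruct (delta X p) eqn:E; auto; rewrite (g_ext _ _ E); auto.
Qed.

Lemma total_extension_refinement : total_extension_property -> total_refinement_property.
Proof.
  intros Hext Y f [F [HF HR]].
  destruct (Hext _ (computable_delta_after X F HF)) as [g [Hg g_ext]].
  apply total_realizer in Hg; destruct Hg as [H [HH HHr]].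
  exists (fun y x => exists p, delta Y p = Some y /\ x = g p); split; [|split].
  - intro y; destruct (delta_surj Y y) as [p Hp]; exists (g p), p; auto.
  - exists H; split; auto; intros p y Hp _.
    destruct (HHr p) as [q [E1 E2]]; exists q, (g p); eauto.
  - intros y Hy x [p [Hp ->]]; destruct (HR p y Hp Hy) as [q [b [E1 [E2 E3]]]].
    rewrite (g_ext p b); auto; rewrite E1; auto.
Qed.

Lemma total_refinement_extension : total_refinement_property -> total_extension_property.
Proof.
  intros Href f Hf.
  destruct (Href baire_space (graph_p f) Hf) as [g [Htot [[H [HH HR]] g_sub]]].
  assert (Hex : forall p, exists b, exists q, H p = Some q /\ delta X q = Some b /\ g p b).
  { intro p; destruct (HR p p eq_refl (Htot p)) as [q [b [E1 [E2 E3]]]]; eauto. }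
  destruct (choice _ Hex) as [g' Hg']; exists g'; split.
  - apply total_realizer; exists H; split; auto.
    intro p; destruct (Hg' p) as [q [E1 [E2 _]]]; eauto.
  - intros p x Ep; destruct (Hg' p) as [q [_ [_ Hgp]]].
    assert (Hb : graph_p f p (g' p)) by (apply g_sub; [exists x |]; auto).
    unfold graph_p in Hb; congruence.
Qed.

Lemma total_refinement_retraceable : total_refinement_property -> multi_retraceable.
Proof.
  intros Href.
  destruct (Href (completion X) (fun o x => o = Some x)) as [r [Rtot [Rcomp r_sub]]].
  { exists unpad; split; [exact comp_baire_unpad|].
    intros p o Ep [x ->]; destruct (compl_delta_Some X p x Ep) as [q [Hm Hd]].
    exists q, x; rewrite (unpad_minus1 p q Hm); auto. }
  exists r; split; [split|]; auto; intros x y; split.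
  - intro Hr; enough (Some x = Some y) by congruence; apply r_sub; [exists x|]; auto.
  - intros ->; destruct (Rtot (Some x)) as [y Hy].
    enough (Some x = Some y) by congruence; apply r_sub; [exists x|]; auto.
Qed.

Lemma retraceable_total_refinement : multi_retraceable -> total_refinement_property.
Proof.
  intros [r [[Rtot Rret] [R [HRc HR]]]] Y f [F [HF HFr]].
  destruct (comp_baire_pad F HF) as [E [HE E_pad]].
  assert (RS : forall p, exists q b, R (E p) = Some q /\ delta X q = Some b /\
      forall o, compl_delta X (E p) = Some o -> r o b).
  { intro p; destruct (compl_delta_total X (E p)) as [o Ho].
    destruct (HR (E p) o Ho (Rtot o)) as [q [b [E1 [E2 E3]]]].
    exists q, b; repeat split; auto; intros o' Ho'; congruence. }
  exists (fun y x => exists p, delta Y p = Some y /\ exists q, R (E p) = Some q /\ delta X q = Some x).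
  split; [|split].
  - intro y; destruct (delta_surj Y y) as [p Hp].
    destruct (RS p) as [q [b [E1 [E2 _]]]]; exists b, p; eauto.
  - exists (fun p => match Some (E p) with Some q => R q | None => None end); split.
    + apply (comp_baire_comp (fun p => Some (E p)) R); auto.
    + intros p y Hp _; destruct (RS p) as [q [b [E1 [E2 _]]]].
      exists q, b; repeat split; auto; exists p; eauto.
  - intros y Hy x [p [Hp [q [E1 E2]]]].
    destruct (HFr p y Hp Hy) as [q0 [b0 [F1 [F2 F3]]]].
    destruct (RS p) as [q1 [b1 [G1 [G2 G3]]]].
    specialize (G3 _ (compl_delta_minus1 X _ _ _ (E_pad p q0 F1) F2)).
    apply Rret in G3; subst b1; congruence.
Qed.
End Equivalences.

Theorem proposition2p6 (X : rep_space) :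
  ( (* (1) *)
    (exists d : baire -> X,
        (forall x : X, exists p, d p = x) /\
        precomplete d /\ rep_equiv (fun p => Some (d p)) (delta X))
  <->
    (* (2) *)
    (forall f : baire -> option X, computable_mv id_rep (delta X) (graph_p f) ->
       exists g : baire -> X,
         computable_mv id_rep (delta X) (graph_t g) /\
         forall p x, f p = Some x -> g p = x) )
  /\
  ( (* (2) *)
    (forall f : baire -> option X, computable_mv id_rep (delta X) (graph_p f) ->
       exists g : baire -> X,
         computable_mv id_rep (delta X) (graph_t g) /\
         forall p x, f p = Some x -> g p = x)
  <->
    (* (3) *)
    (forall (Y : rep_space) (f : Y -> X -> Prop),
       computable_mv (delta Y) (delta X) f ->
       exists g : Y -> X -> Prop,
         mv_total g /\ computable_mv (delta Y) (delta X) g /\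
         forall y, mv_dom f y -> forall x, g y x -> f y x) )
  /\
  ( (* (3) *)
    (forall (Y : rep_space) (f : Y -> X -> Prop),
       computable_mv (delta Y) (delta X) f ->
       exists g : Y -> X -> Prop,
         mv_total g /\ computable_mv (delta Y) (delta X) g /\
         forall y, mv_dom f y -> forall x, g y x -> f y x)
  <->
    (* (4) *)
    (exists r : option X -> X -> Prop,
       mv_retraction r /\ computable_mv (compl_delta X) (delta X) r) ).
Proof.
  split; [|split]; split.
  - exact (precomplete_total_extension X).
  - exact (total_extension_precomplete X).
  - exact (total_extension_refinement X).
  - exact (total_refinement_extension X).
  - exact (total_refinement_retraceable X).
  - exact (retraceable_total_refinement X).
Qed.
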